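(* Let $\alpha>1/2$, $d\in\mathbb N$, $1\ge\gamma_1\ge\dots\ge\gamma_d>0$, and $m\in\mathbb N_0$. Then $$K^\alpha_{2^{m-(d-1)},\boldsymbol\gamma,d}\subseteq Q^\alpha_{m,\boldsymbol\gamma,d}\subseteq K^\alpha_{2^m,\boldsymbol\gamma,d}.$$
   Context: For $\gamma>0$, $h\in\mathbb Z$: $r_\alpha(\gamma,h)=\max(|h|^{2\alpha}/\gamma,1)$, and $r_\alpha(\boldsymbol\gamma,\boldsymbol k)=\prod_{j=1}^dr_\alpha(\gamma_j,k_j)$ for $\boldsymbol k\in\mathbb Z^d$. For $\nu>0$, the weighted continuous hyperbolic cross is $K^\alpha_{\nu,\boldsymbol\gamma,d}=\{\boldsymbol k\in\mathbb Z^d:r_\alpha(\boldsymbol\gamma,\boldsymbol k)\le\nu\}$. The weighted step hyperbolic cross is $Q^\alpha_{m,\boldsymbol\gamma,d}=\bigcup_{\boldsymbol t\in\mathbb N_0^d,\ \|\boldsymbol t\|_1=m}\{\boldsymbol k\in\mathbb Z^d:r_\alpha(\gamma_j,k_j)\le2^{t_j}\ \forall j\in[d]\}$. *)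

From HB Require Import structures.
From mathcomp Require Import all_boot all_order all_algebra.
From mathcomp Require Import all_classical all_reals all_analysis.
Set Implicit Arguments. Unset Strict Implicit. Unset Printing Implicit Defensive.
Import Order.TTheory GRing.Theory Num.Theory.
Local Open Scope ring_scope.
Local Open Scope classical_set_scope.

(* r_alpha(gamma, h) = max(|h|^(2 alpha) / gamma, 1), h integer.
   powR satisfies 0 `^ x = 0 for x <> 0, so 0^(2 alpha) = 0. *)
Definition r1 {R : realType} (alpha gamma : R) (h : int) : R :=
  Num.max (((`|h|%N)%:R `^ (2 * alpha)) / gamma) 1.

Definition rvec {R : realType} {d : nat} (alpha : R) (gamma : 'I_d -> R)
  (k : 'I_d -> int) : R :=
  \prod_(j < d) r1 alpha (gamma j) (k j).

Definition Kcross {R : realType} {d : nat} (alpha nu : R) (gamma : 'I_d -> R)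
  : set ('I_d -> int) :=
  [set k | rvec alpha gamma k <= nu].

Definition Qcross {R : realType} {d : nat} (alpha : R) (m : nat)
  (gamma : 'I_d -> R) : set ('I_d -> int) :=
  [set k | exists t : 'I_d -> nat, (\sum_(j < d) t j)%N = m /\
           forall j : 'I_d, r1 alpha (gamma j) (k j) <= 2 ^+ (t j)].

From HB Require Import structures.
From mathcomp Require Import all_boot all_order all_algebra.
From mathcomp Require Import all_classical all_reals all_analysis.
From mathcomp Require Import zify lra.
Set Implicit Arguments.
Unset Strict Implicit.
Unset Printing Implicit Defensive.

Import Order.TTheory GRing.Theory Num.Theory.
Local Open Scope ring_scope.
Local Open Scope classical_set_scope.

(* Only [r_alpha >= 1] matters.  If [k] lies in [Q^alpha_m] with
   levels [t], then [r_alpha(gamma, k) <= prod_j 2^(t_j) = 2^m].  Conversely,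
   let [t_j] be the least integer with [r_alpha(gamma_j, k_j) <= 2^(t_j)]; then
   [2^(t_j) < 2 r_alpha(gamma_j, k_j)] unless [t_j = 0], which yields
   [2^(sum_j t_j) < 2^d r_alpha(gamma, k) <= 2^(m+1)], i.e. [sum_j t_j <= m];
   the missing levels are then added to one coordinate. *)

Section CeilLog2.

Variable R : archiRealFieldType.

Lemma exists_exp2_ge (x : R) : exists n : nat, x <= 2 ^+ n.
Proof.
have [x_le0|x_gt0] := leP x 0; first by exists 0%N; rewrite (le_trans x_le0).
exists (Num.Def.archi_bound x); apply/ltW/(lt_trans (archi_boundP (ltW x_gt0))).
by rewrite -natrX ltr_nat ltn_expl.
Qed.

Definition ceil_log2 (x : R) : nat := ex_minn (exists_exp2_ge x).

Lemma le_exp2_ceil_log2 (x : R) : x <= 2 ^+ ceil_log2 x.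
Proof. by rewrite /ceil_log2; case: ex_minnP. Qed.

Lemma exp2_ceil_log2_lt (x : R) : (0 < ceil_log2 x)%N -> 2 ^+ ceil_log2 x < 2 * x.
Proof.
rewrite /ceil_log2; case: ex_minnP => n _ n_min n_gt0.
rewrite ltNge; apply/negP => le_2n_2x.
have : (n <= n.-1)%N by apply: n_min; rewrite -(ler_pM2l (ltr0Sn _ 1)) -exprS prednK.
by case: n n_gt0 {le_2n_2x n_min} => // n _; rewrite ltnn.
Qed.

Lemma exp2_ceil_log2_le (x : R) : 1 <= x -> 2 ^+ ceil_log2 x <= 2 * x.
Proof.
move=> x_ge1; have [->|/exp2_ceil_log2_lt/ltW //] := posnP (ceil_log2 x).
by rewrite expr0 (le_trans x_ge1) // ler_peMl ?ler1n // (le_trans ler01).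
Qed.

End CeilLog2.

Section ProductOfLevels.

Variables (R : archiRealFieldType) (d : nat) (r : 'I_d -> R).
Hypothesis r_ge1 : forall j, 1 <= r j.

Lemma prod_le_exp2_sum (t : 'I_d -> nat) :
  (forall j, r j <= 2 ^+ t j) -> \prod_j r j <= 2 ^+ (\sum_j t j).
Proof.
by move=> r_le; rewrite -prodrXr; apply: ler_prod => j _; rewrite (le_trans ler01) ?r_le.
Qed.

Lemma exp2_sum_ceil_log2_lt :
  (0 < d)%N -> 2 ^+ (\sum_j ceil_log2 (r j)) < 2 ^+ d * \prod_j r j.
Proof.
move=> d_gt0.
have exp2d : (2 : R) ^+ d = \prod_(j < d) 2 by rewrite prodr_const card_ord.
rewrite -prodrXr exp2d -big_split /=.
have [all_gt0|] := boolP [forall j, 0 < ceil_log2 (r j)]%N.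
  apply: ltr_prod => [|j _].
    by apply/hasP; exists (Ordinal d_gt0); rewrite ?mem_index_enum.
  by rewrite exprn_ge0 ?ler0n //= exp2_ceil_log2_lt // (forallP all_gt0).
case/forallPn => j0; rewrite -eqn0Ngt => /eqP t_j0.
rewrite (bigD1 j0) //= [X in _ < X](bigD1 j0) //= t_j0 expr0 mul1r.
have prod_le :
    \prod_(j | j != j0) 2 ^+ ceil_log2 (r j) <= \prod_(j | j != j0) (2 * r j).
  by apply: ler_prod => j _; rewrite exprn_ge0 ?ler0n //= exp2_ceil_log2_le.
apply: le_lt_trans prod_le _; rewrite ltr_pMl; first by have := r_ge1 j0; lra.
by apply: prodr_gt0 => j _; have := r_ge1 j; lra.
Qed.

Lemma sum_ceil_log2_le (m : nat) : (0 < d)%N ->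
  2 ^+ d.-1 * \prod_j r j <= 2 ^+ m -> (\sum_j ceil_log2 (r j) <= m)%N.
Proof.
move=> d_gt0 prod_le; rewrite -ltnS -(ltr_eXn2l (_ : (1 : R) < 2)) ?ltr1n //.
apply: lt_le_trans (exp2_sum_ceil_log2_lt d_gt0) _.
by rewrite -[in 2 ^+ d](prednK d_gt0) exprS -mulrA exprS ler_pM2l.
Qed.

End ProductOfLevels.

Lemma exists_sum_eq_ge d (t : 'I_d -> nat) (m : nat) :
  (0 < d)%N -> (\sum_j t j <= m)%N ->
  exists2 t' : 'I_d -> nat, (\sum_j t' j = m)%N & forall j, (t j <= t' j)%N.
Proof.
move=> d_gt0 sum_le; pose j0 := Ordinal d_gt0; pose c := (m - \sum_j t j)%N.
exists (fun j => t j + (j == j0) * c)%N => [|j]; last exact: leq_addr.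
rewrite big_split /= [X in (_ + X)%N](bigD1 j0) //= mul1n.
have -> : (\sum_(j < d | j != j0) (j == j0) * c = 0)%N by apply: big1 => j /negbTE ->.
by rewrite addn0 subnKC.
Qed.

Lemma r1_ge1 (R : realType) (alpha gamma : R) (h : int) : 1 <= r1 alpha gamma h.
Proof. by rewrite /r1 le_max lexx orbT. Qed.

Lemma Qcross_sub_Kcross (R : realType) (alpha : R) d (m : nat) (gamma : 'I_d -> R) :
  Qcross alpha m gamma `<=` Kcross alpha (2 ^+ m) gamma.
Proof. by move=> k [t [<- r_le]]; apply: prod_le_exp2_sum => // j; apply: r1_ge1. Qed.

Lemma Kcross_sub_Qcross (R : realType) (alpha : R) d (m : nat) (gamma : 'I_d -> R) :
  (0 < d)%N -> Kcross alpha (2 ^ (m%:Z - (d%:Z - 1))) gamma `<=` Qcross alpha m gamma.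
Proof.
move=> d_gt0 k; rewrite /Kcross /Qcross /rvec /= => prod_le.
pose r j := r1 alpha (gamma j) (k j).
have r_ge1 j : 1 <= r j by apply: r1_ge1.
have exp2_m : (2 : R) ^+ d.-1 * 2 ^ (m%:Z - (d%:Z - 1)) = 2 ^+ m.
  by rewrite !exprnP -expfzDr //; congr (_ ^ _); rewrite -subn1; lia.
have scaled_prod_le : 2 ^+ d.-1 * \prod_j r j <= 2 ^+ m by rewrite -exp2_m ler_pM2l.
have [t sum_t le_t] :=
  exists_sum_eq_ge d_gt0 (sum_ceil_log2_le r_ge1 d_gt0 scaled_prod_le).
exists t; split => // j; apply: le_trans (le_exp2_ceil_log2 (r j)) _.
by rewrite ler_eXn2l ?ltr1n.
Qed.

Theorem lemma3p17 (R : realType) (alpha : R) (d m : nat) (gamma : 'I_d -> R) :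
  1 / 2 < alpha -> (0 < d)%N ->
  (forall j : 'I_d, 0 < gamma j <= 1) ->
  (forall i j : 'I_d, (i <= j)%N -> gamma j <= gamma i) ->
  Kcross alpha ((2 : R) ^ (m%:Z - (d%:Z - 1))) gamma `<=` Qcross alpha m gamma /\
  Qcross alpha m gamma `<=` Kcross alpha ((2 : R) ^+ m) gamma.
Proof.
move=> _ d_gt0 _ _; split; [exact: Kcross_sub_Qcross | exact: Qcross_sub_Kcross].
Qed.
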